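(* Let $(M,J)$ be a complex manifold and let $\psi^k:H^k_J(M)\otimes\mathbb C\to H^k_{\bar\partial}(M)$ be the natural map sending the class of $\alpha$ (which is $\mathrm d$-closed and $\mathcal L_J$-closed, hence $\bar\partial$-closed) to its class in $H^k_{\bar\partial}(M)$. Then $\psi^k$ is well defined, and $M$ satisfies the $\partial\bar\partial$-lemma in degree $k$ if and only if $\psi^k$ is injective and $\psi^{k-1}$ is surjective.
   Context: For a vector-valued $k$-form $K=K^je_j$ on $M$, $\iota_K\alpha=K^j\wedge(\iota_{e_j}\alpha)$ and $\mathcal L_K=\iota_K\mathrm d-(-1)^{k-1}\mathrm d\iota_K$; for integrable $J$, complex-linearly extended, $\mathcal L_J=i(\partial-\bar\partial)$ and $\mathrm d=\partial+\bar\partial$. $H^k_J(M)$ is the $k$-th cohomology of $((\ker\mathcal L_J)^\bullet,\mathrm d)$ where $(\ker\mathcal L_J)^k$ are the real $k$-forms killed by $\mathcal L_J$; $H^k_J(M)\otimes\mathbb C$ is the corresponding cohomology of complex forms. $H^k_{\bar\partial}(M)=\ker(\bar\partial:\Omega^k_{\mathbb C}\to\Omega^{k+1}_{\mathbb C})/\bar\partial(\Omega^{k-1}_{\mathbb C})$ (total degree $k$ complex forms). $M$ satisfies the $\partial\bar\partial$-lemma in degree $k$ if for every $\alpha\in\Omega^k(M)\otimes\mathbb C$: $\alpha$ is $\partial$-closed, $\bar\partial$-closed and $\mathrm d$-exact if and only if $\alpha=\partial\bar\partial\beta$ for some complex $(k-2)$-form $\beta$. *)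

(* Abstract algebraic model of the complex-valued differential
   forms of a complex manifold: a bounded double complex of algC-vector spaces. *)
From HB Require Import structures.
From mathcomp Require Import all_boot all_order all_algebra all_field.
Set Implicit Arguments. Unset Strict Implicit. Unset Printing Implicit Defensive.
Import Order.TTheory GRing.Theory Num.Theory.
Local Open Scope ring_scope.

Section DoubleComplex.
Variable V : lmodType algC.
(* pr p q : projection of a form onto its (p,q)-component *)
Variable pr : nat -> nat -> V -> V.
Variables del delb : V -> V.

Definition is_dcomplex (n : nat) : Prop :=
  [/\ [/\ (forall p q, linear (pr p q)), linear del & linear delb],
      (forall p q p' q' v, pr p q (pr p' q' v) = if (p == p') && (q == q') then pr p q v else 0),
      (forall p q v, (n < p)%N \/ (n < q)%N -> pr p q v = 0),
      (forall v, v = \sum_(p < n.+1) \sum_(q < n.+1) pr p q v) &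
   [/\ (forall p q v, del (pr p q v) = pr p.+1 q (del v)),
       (forall p q v, delb (pr p q v) = pr p q.+1 (delb v)),
       (forall v, del (del v) = 0),
       (forall v, delb (delb v) = 0) &
       (forall v, del (delb v) + delb (del v) = 0)]].

(* total degree k (an integer; negative degrees contain only 0) *)
Definition is_deg (k : int) (v : V) : Prop :=
  match k with
  | Posz k => v = \sum_(p < k.+1) pr p (k - p) v
  | Negz _ => v = 0
  end.

Definition dd (v : V) : V := del v + delb v.
Definition LJ (v : V) : V := 'i *: (del v - delb v).

(* cocycles / coboundaries of ((ker L_J)^•, d) in degree k *)
Definition J_closed (k : int) (a : V) : Prop := [/\ is_deg k a, LJ a = 0 & dd a = 0].
Definition J_exact (k : int) (a : V) : Prop :=
  exists g, [/\ is_deg (k - 1) g, LJ g = 0 & a = dd g].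

Definition dbar_closed (k : int) (a : V) : Prop := is_deg k a /\ delb a = 0.
Definition dbar_exact (k : int) (a : V) : Prop :=
  exists b, is_deg (k - 1) b /\ a = delb b.

Definition psi_injective (k : int) : Prop :=
  forall a, J_closed k a -> dbar_exact k a -> J_exact k a.
Definition psi_surjective (k : int) : Prop :=
  forall b, dbar_closed k b -> exists a, J_closed k a /\ dbar_exact k (b - a).

Definition ddbar_lemma (k : int) : Prop :=
  forall a, is_deg k a ->
    ((del a = 0 /\ delb a = 0 /\ exists g, is_deg (k - 1) g /\ a = dd g)
     <-> exists b, is_deg (k - 2) b /\ a = del (delb b)).
End DoubleComplex.

(** Write [d^c]-exact for forms [del g - delb g]. The involution [sign] acting by
    [(-1)^p] on [(p,q)]-forms anticommutes with [del] and commutes with [delb], so it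
    exchanges [d]-exact and [d^c]-exact forms; hence the [del delb]-lemma in degree [k]
    also makes closed [d^c]-exact forms [del delb]-exact.

    If the [del delb]-lemma holds and [del (delb b) = 0], both [dd b] and
    [del b - delb b] are [del delb]-exact, hence so are [del b] and [delb b].  The
    second fact gives injectivity of [psi^k] (a [del delb]-exact form is [J]-exact),
    the first surjectivity of [psi^(k-1)] (subtract [delb e] from a [delb]-closed [b]).

    Conversely, for [g] with [delb (del g) = 0], injectivity of [psi^k] writes
    [delb g = dd h] with [del h = delb h]; surjectivity of [psi^(k-1)] applied to the
    [delb]-closed form [g - 2h] then shows that [del g - delb g] is [del delb]-exact.
    Applied to [sign g] this turns a closed [d]-exact form [dd g] into a
    [del delb]-exact one. *)
From HB Require Import structures.
From mathcomp Require Import all_boot all_order all_algebra all_field.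
Set Implicit Arguments. Unset Strict Implicit. Unset Printing Implicit Defensive.
Import Order.TTheory GRing.Theory Num.Theory.
Local Open Scope ring_scope.

Lemma double_eq0 (V : lmodType algC) (x : V) : x + x = 0 -> x = 0.
Proof.
by rewrite -mulr2n -scaler_nat => /eqP; rewrite scaler_eq0 pnatr_eq0 => /eqP.
Qed.

Lemma half_double (V : lmodType algC) (x : V) : 2^-1 *: (x + x) = x.
Proof.
by rewrite -mulr2n -scaler_nat scalerA mulVf ?scale1r // pnatr_eq0.
Qed.

Lemma subr2 (k : int) : k - 2 = k - 1 - 1.
Proof. by rewrite -addrA -opprD. Qed.

Section DoubleComplex.
Variables (V : lmodType algC) (n : nat) (pr : nat -> nat -> V -> V) (del delb : V -> V).
Hypothesis dc : is_dcomplex pr del delb n.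

Local Notation is_deg := (is_deg pr).
Local Notation J_closed := (J_closed pr del delb).
Local Notation J_exact := (J_exact pr del delb).
Local Notation dbar_closed := (dbar_closed pr delb).
Local Notation dbar_exact := (dbar_exact pr delb).
Local Notation psi_injective := (psi_injective pr del delb).
Local Notation psi_surjective := (psi_surjective pr del delb).
Local Notation ddbar_lemma := (ddbar_lemma pr del delb).

Let pr_linear p q : linear (pr p q). Proof. by case: dc => -[]. Qed.
Let del_linear : linear del. Proof. by case: dc => -[]. Qed.
Let delb_linear : linear delb. Proof. by case: dc => -[]. Qed.
#[local] HB.instance Definition _ := GRing.isLinear.Build algC V V _ del del_linear.
#[local] HB.instance Definition _ := GRing.isLinear.Build algC V V _ delb delb_linear.
(* Local instances cannot be indexed by [p q], so [pr p q] is packaged by hand. *)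
Let pr_lin p q : {linear V -> V} :=
  HB.pack (pr p q) (GRing.isLinear.Build algC V V _ (pr p q) (pr_linear p q)).
Let pr0 p q : pr p q 0 = 0 := linear0 (pr_lin p q).
Let prP p q : linear (pr p q) := linearP (pr_lin p q).
Let prN p q : {morph pr p q : x / - x} := linearN (pr_lin p q).
Let prD p q : {morph pr p q : x y / x + y} := linearD (pr_lin p q).
Let prZ p q a x : pr p q (a *: x) = a *: pr p q x := linearZ_LR (pr_lin p q) a x.
Let pr_sum p q I r (P : pred I) (F : I -> V) :
  pr p q (\sum_(i <- r | P i) F i) = \sum_(i <- r | P i) pr p q (F i) :=
  linear_sum (pr_lin p q) r P F.

Let pr_pr p q p' q' v :
  pr p q (pr p' q' v) = if (p == p') && (q == q') then pr p q v else 0.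
Proof. by case: dc. Qed.
Let pr_out p q v : (n < p)%N \/ (n < q)%N -> pr p q v = 0.
Proof. by case: dc => _ _ h _ _; apply: h. Qed.
Let pr_decomp v : v = \sum_(p < n.+1) \sum_(q < n.+1) pr p q v.
Proof. by case: dc. Qed.
Let del_pr p q v : del (pr p q v) = pr p.+1 q (del v).
Proof. by case: dc => _ _ _ _ []. Qed.
Let delb_pr p q v : delb (pr p q v) = pr p q.+1 (delb v).
Proof. by case: dc => _ _ _ _ []. Qed.
Let del_del v : del (del v) = 0.
Proof. by case: dc => _ _ _ _ []. Qed.
Let delb_delb v : delb (delb v) = 0.
Proof. by case: dc => _ _ _ _ []. Qed.
Let delb_del v : delb (del v) = - del (delb v).
Proof. by case: dc => _ _ _ _ [_ _ _ _ /(_ v) /eqP]; rewrite addrC addr_eq0 => /eqP. Qed.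

Lemma form_eq x y : (forall p q, pr p q x = pr p q y) -> x = y.
Proof.
move=> eq_pr; rewrite (pr_decomp x) (pr_decomp y).
by apply: eq_bigr => p _; apply: eq_bigr => q _.
Qed.

Lemma pr_weighted_sum (w : nat -> nat -> algC) p q v :
  pr p q (\sum_(p' < n.+1) \sum_(q' < n.+1) w p' q' *: pr p' q' v) = w p q *: pr p q v.
Proof.
rewrite pr_sum (eq_bigr (fun p' : 'I_n.+1 => if (p' : nat) == p then
    \sum_(q' < n.+1) if (q' : nat) == q then w p q *: pr p q v else 0 else 0)).
  rewrite -big_mkcond (big_ord1_eq _ (fun=> _)) -big_mkcond (big_ord1_eq _ (fun=> _)).
  rewrite !ltnS; have [_|lt_n_p] := leqP p n; last by rewrite pr_out ?scaler0 //; left.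
  by have [//|lt_n_q] := leqP q n; rewrite pr_out ?scaler0 //; right.
move=> p' _; rewrite pr_sum; have [<-|ne_p] := eqVneq (p' : nat) p.
  apply: eq_bigr => q' _; rewrite prZ pr_pr eqxx eq_sym.
  by case: eqP => [->|]; rewrite ?scaler0.
by apply: big1 => q' _; rewrite prZ pr_pr eq_sym (negPf ne_p) scaler0.
Qed.

Lemma pr0del q v : pr 0 q (del v) = 0.
Proof.
rewrite (pr_decomp v) linear_sum pr_sum big1 // => p _.
by rewrite linear_sum pr_sum big1 // => q' _; rewrite /= del_pr pr_pr.
Qed.

Lemma pr0delb p v : pr p 0 (delb v) = 0.
Proof.
rewrite (pr_decomp v) linear_sum pr_sum big1 // => p' _.
by rewrite linear_sum pr_sum big1 // => q _; rewrite /= delb_pr pr_pr andbF.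
Qed.

Definition sign v := \sum_(p < n.+1) \sum_(q < n.+1) (-1) ^+ p *: pr p q v.

Lemma pr_sign p q v : pr p q (sign v) = (-1) ^+ p *: pr p q v.
Proof. exact: (pr_weighted_sum (fun p _ => (-1) ^+ p)). Qed.

Lemma sign_is_linear : linear sign.
Proof.
by move=> a x y; apply: form_eq => p q; rewrite pr_sign !prP !pr_sign scalerDr !scalerA mulrC.
Qed.
#[local] HB.instance Definition _ := GRing.isLinear.Build algC V V _ sign sign_is_linear.

Lemma signK : involutive sign.
Proof.
by move=> v; apply: form_eq => p q; rewrite !pr_sign scalerA -exprMn mulrNN mulr1 expr1n scale1r.
Qed.

Lemma del_sign v : del (sign v) = - sign (del v).
Proof.
apply: form_eq => -[|p] q; first by rewrite prN pr_sign !pr0del scaler0 oppr0.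
by rewrite prN pr_sign -!del_pr pr_sign linearZ /= exprS mulN1r scaleNr opprK.
Qed.

Lemma delb_sign v : delb (sign v) = sign (delb v).
Proof.
apply: form_eq => p [|q]; first by rewrite pr_sign !pr0delb scaler0.
by rewrite pr_sign -!delb_pr pr_sign linearZ.
Qed.

Definition homog (k : int) v := forall p q, Posz (p + q) != k -> pr p q v = 0.

Lemma is_degP k v : is_deg k v <-> homog k v.
Proof.
split.
- case: k => [m|m] /= -> p q ne_k; last by rewrite pr0.
  rewrite pr_sum; apply: big1 => i _; rewrite pr_pr.
  case: ifP => // /andP[/eqP eq_p /eqP eq_q]; move: ne_k.
  by rewrite eq_p eq_q subnKC ?eqxx // -ltnS ltn_ord.
- case: k => [m|m] /= homog_v; apply: form_eq => p q; last first.
    by rewrite pr0 homog_v.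
  rewrite pr_sum (eq_bigr (fun i : 'I_m.+1 => if (q == m - i)%N && (i == p :> nat)
      then pr p q v else 0)); last by move=> i _; rewrite pr_pr [p == _]eq_sym andbC.
  rewrite -big_mkcond (big_ord1_cond_eq _ (fun=> _) (fun i => q == m - i)%N).
  have [[<-]|ne_k] := eqVneq (Posz (p + q)) (Posz m); last by rewrite homog_v //; case: ifP.
  by rewrite addKn eqxx ltnS leq_addr.
Qed.

Lemma homogD k x y : homog k x -> homog k y -> homog k (x + y).
Proof. by move=> hx hy p q ne_k; rewrite prD hx ?hy ?addr0. Qed.

Lemma homogZ k a x : homog k x -> homog k (a *: x).
Proof. by move=> hx p q ne_k; rewrite prZ hx ?scaler0. Qed.

Lemma homogN k x : homog k x -> homog k (- x).
Proof. by rewrite -scaleN1r; apply: homogZ. Qed.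

Lemma homogB k x y : homog k x -> homog k y -> homog k (x - y).
Proof. by move=> hx hy; apply: homogD => //; apply: homogN. Qed.

Lemma homog_sign k x : homog k x -> homog k (sign x).
Proof. by move=> hx p q ne_k; rewrite pr_sign hx ?scaler0. Qed.

Lemma homog_del k x : homog (k - 1) x -> homog k (del x).
Proof.
move=> hx [|p] q ne_k; first exact: pr0del.
rewrite -del_pr hx ?raddf0 //; apply: contraNneq ne_k => eq_k.
by rewrite addSn -addn1 PoszD eq_k subrK.
Qed.

Lemma homog_delb k x : homog (k - 1) x -> homog k (delb x).
Proof.
move=> hx p [|q] ne_k; first exact: pr0delb.
rewrite -delb_pr hx ?raddf0 //; apply: contraNneq ne_k => eq_k.
by rewrite addnS -addn1 PoszD eq_k subrK.
Qed.

Local Notation LJ := (LJ del delb).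
Local Notation dd := (dd del delb).

Lemma LJ_eq0 g : LJ g = 0 <-> del g = delb g.
Proof.
rewrite /LJ; split=> [/eqP|->]; last by rewrite subrr scaler0.
by rewrite scaler_eq0 (negPf (neq0Ci _)) subr_eq0 => /eqP.
Qed.

Lemma J_closedP k a : J_closed k a <-> [/\ homog k a, del a = 0 & delb a = 0].
Proof.
split=> [[/is_degP homog_a /LJ_eq0 eq_a]|[homog_a da dba]].
  by rewrite /dd eq_a => /double_eq0 dba; split; rewrite ?eq_a.
by split; [exact/is_degP | apply/LJ_eq0; rewrite da dba | rewrite /dd da dba addr0].
Qed.

Lemma J_closed_dbar_closed k a : J_closed k a -> dbar_closed k a.
Proof. by case/J_closedP=> /is_degP. Qed.

Lemma J_exact_dbar_exact k a : J_exact k a -> dbar_exact k a.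
Proof.
case=> g [deg_g /LJ_eq0 eq_g ->]; exists (g + g); split; last by rewrite /dd eq_g linearD.
by apply/is_degP; apply: homogD; apply/is_degP.
Qed.

Lemma ddbar_J_exact k e : homog (k - 2) e -> J_exact k (del (delb e)).
Proof.
rewrite subr2 => homog_e; exists (2^-1 *: (delb e - del e)).
have del_h : del (delb e - del e) = del (delb e) by rewrite linearB /= del_del subr0.
have delb_h : delb (delb e - del e) = del (delb e) by rewrite linearB /= delb_delb delb_del sub0r opprK.
split; first by apply/is_degP/homogZ/homogB; [apply: homog_delb | apply: homog_del].
  by apply/LJ_eq0; rewrite !linearZ /= del_h delb_h.
by rewrite /dd !linearZ /= del_h delb_h -scalerDr half_double.
Qed.

Lemma ddbar_dc_exact k a g : ddbar_lemma k -> homog (k - 1) g ->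
  del a = 0 -> delb a = 0 -> a = del g - delb g ->
  exists c, homog (k - 2) c /\ a = del (delb c).
Proof.
move=> ddbar homog_g da dba eq_a.
have homog_a : homog k a by rewrite eq_a; apply: homogB; [apply: homog_del | apply: homog_delb].
have [c [/is_degP homog_c eq_c]] : exists c, is_deg (k - 2) c /\ sign a = del (delb c).
  apply/(ddbar _ _).1; first exact/is_degP/homog_sign.
  split; first by rewrite del_sign da linear0 oppr0.
  split; first by rewrite delb_sign dba linear0.
  exists (- sign g); split; first exact/is_degP/homogN/homog_sign.
  by rewrite eq_a linearB /= -delb_sign -[sign (del g)]opprK -del_sign /dd !linearN.
exists (- sign c); split; first exact/homogN/homog_sign.
by rewrite -[a]signK eq_c !linearN /= delb_sign del_sign opprK.
Qed.

Lemma ddbar_split k b : ddbar_lemma k -> homog (k - 1) b -> del (delb b) = 0 ->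
  (exists c, homog (k - 2) c /\ del b = del (delb c)) /\
  (exists c, homog (k - 2) c /\ delb b = del (delb c)).
Proof.
move=> ddbar homog_b ddb0.
have dbd0 : delb (del b) = 0 by rewrite delb_del ddb0 oppr0.
have [c1 [/is_degP homog_c1 eq_c1]] : exists c, is_deg (k - 2) c /\ dd b = del (delb c).
  apply/(ddbar _ _).1; first by apply/is_degP/homogD; [apply: homog_del | apply: homog_delb].
  rewrite /dd !linearD /= del_del delb_delb ddb0 dbd0 !addr0.
  by do 2!split=> //; exists b; split; first exact/is_degP.
have [c2 [homog_c2 eq_c2]] : exists c, homog (k - 2) c /\ del b - delb b = del (delb c).
  apply: (ddbar_dc_exact ddbar homog_b) => //.
    by rewrite linearB /= del_del ddb0 subrr.
  by rewrite linearB /= dbd0 delb_delb subrr.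
rewrite /dd in eq_c1; split.
  exists (2^-1 *: (c1 + c2)); split; first exact/homogZ/homogD.
  by rewrite !linearZ !linearD /= -eq_c1 -eq_c2 addrACA subrr addr0 half_double.
exists (2^-1 *: (c1 - c2)); split; first exact/homogZ/homogB.
by rewrite !linearZ !linearB /= -eq_c1 -eq_c2 opprB [del b + _]addrC addrACA subrr addr0 half_double.
Qed.

Lemma ddbar_psi_injective k : ddbar_lemma k -> psi_injective k.
Proof.
move=> ddbar a /J_closedP[_ da _] [b [/is_degP homog_b eq_a]].
have ddb0 : del (delb b) = 0 by rewrite -eq_a.
have [_ [c [homog_c eq_c]]] := ddbar_split ddbar homog_b ddb0.
by rewrite eq_a eq_c; apply: ddbar_J_exact.
Qed.

Lemma ddbar_psi_surjective k : ddbar_lemma k -> psi_surjective (k - 1).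
Proof.
move=> ddbar b [/is_degP homog_b dbb].
have ddb0 : del (delb b) = 0 by rewrite dbb linear0.
have [[e [homog_e eq_e]] _] := ddbar_split ddbar homog_b ddb0.
rewrite subr2 in homog_e; exists (b - delb e); split.
  apply/J_closedP; split; first by apply: homogB => //; apply: homog_delb.
    by rewrite linearB /= eq_e subrr.
  by rewrite linearB /= dbb delb_delb subrr.
by exists e; split; [apply/is_degP | rewrite opprB addrC subrK].
Qed.

Lemma psi_dc_ddbar_exact k g : psi_injective k -> psi_surjective (k - 1) ->
  homog (k - 1) g -> delb (del g) = 0 ->
  exists c, homog (k - 2) c /\ del g - delb g = del (delb c).
Proof.
move=> inj surj homog_g dbd0.
have [h [/is_degP homog_h /LJ_eq0 eq_h eq_dbg]] : J_exact k (delb g).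
  apply: inj; last by exists g; split; first exact/is_degP.
  apply/J_closedP; split; first exact: homog_delb.
    by rewrite -[del (delb g)]opprK -delb_del dbd0 oppr0.
  exact: delb_delb.
have [a [/J_closedP[_ da _] [c [/is_degP homog_c eq_c]]]] :
    exists a, J_closed (k - 1) a /\ dbar_exact (k - 1) (g - h - h - a).
  apply: surj; split; first by apply/is_degP/homogB; first apply: homogB.
  by rewrite !linearB /= eq_dbg /dd eq_h addrK subrr.
have eq_g : g = a + delb c + h + h by rewrite -eq_c [a + _]addrC !subrK.
exists c; split; first by rewrite subr2.
rewrite eq_dbg /dd -eq_h eq_g !linearD /= da add0r.
by rewrite -opprD -[del (delb c) + _ + _]addrA addrK.
Qed.

Lemma psi_ddbar_lemma k : psi_injective k -> psi_surjective (k - 1) -> ddbar_lemma k.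
Proof.
move=> inj surj a _; split; last first.
  case=> b [/is_degP homog_b ->]; split; first by rewrite del_del.
  split; first by rewrite delb_del delb_delb linear0 oppr0.
  exists (delb b); split; last by rewrite /dd delb_delb addr0.
  by apply/is_degP/homog_delb; rewrite -subr2.
case=> _ [dba [g [/is_degP homog_g eq_a]]].
have dbd0 : delb (del g) = 0 by move: dba; rewrite eq_a /dd linearD /= delb_delb addr0.
have dbd_sign : delb (del (sign g)) = 0.
  by rewrite del_sign linearN /= delb_sign dbd0 linear0 oppr0.
have [c [homog_c eq_c]] := psi_dc_ddbar_exact inj surj (homog_sign homog_g) dbd_sign.
exists (sign c); split; first exact/is_degP/homog_sign.
apply: (can_inj signK); rewrite delb_sign del_sign linearN /= signK.
by rewrite eq_a /dd linearD /= -delb_sign -[sign (del g)]opprK -del_sign -eq_c opprB addrC.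
Qed.
End DoubleComplex.

Theorem theorem3p22 (V : lmodType algC) (n : nat) (pr : nat -> nat -> V -> V)
    (del delb : V -> V) (k : int) :
  is_dcomplex pr del delb n ->
  [/\ (forall a, J_closed pr del delb k a -> dbar_closed pr delb k a),
      (forall a, J_exact pr del delb k a -> dbar_exact pr delb k a) &
      (ddbar_lemma pr del delb k <->
         psi_injective pr del delb k /\ psi_surjective pr del delb (k - 1))].
Proof.
move=> dc; split; [exact: (J_closed_dbar_closed dc) | exact: (J_exact_dbar_exact dc) | split].
  by move=> ddbar; split; [exact: (ddbar_psi_injective dc) | exact: (ddbar_psi_surjective dc)].
by case; exact: (psi_ddbar_lemma dc).
Qed.
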